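(* Let $(X,\mathcal{A})$ be a resolvable design, let $z\geq 2$, and let $\mathcal{P}_1,\dots,\mathcal{P}_z$ be $z$ distinct parallel classes. For each $s\in[z]$ choose two distinct blocks $C_{s,i_s},C_{s,j_s}\in\mathcal{P}_s$. Let $\mathcal{X}$ be the set of $2^z$ users, where the user indexed by $(a_1,\dots,a_z)$ with $a_s\in\{i_s,j_s\}$ has accessible point set $Y_{(a_1,\dots,a_z)}=C_{1,a_1}\cup\cdots\cup C_{z,a_z}$. For a user $m=(a_1,\dots,a_z)\in\mathcal{X}$ let $e_s$ denote the element of $\{i_s,j_s\}\setminus\{a_s\}$ and $f_m=C_{1,e_1}\cap\cdots\cap C_{z,e_z}$. Then for every $m\in\mathcal{X}$, $$f_m=\bigcap_{t\in\mathcal{X}\setminus\{m\}}Y_t.$$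
   Context: A resolvable design $(X,\mathcal{A})$: $X$ a finite set of points, $\mathcal{A}$ a collection of blocks (subsets of $X$ of a common size) partitioned into parallel classes, each parallel class being a set of pairwise disjoint blocks whose union is $X$. *)

From mathcomp Require Import all_boot.
Set Implicit Arguments. Unset Strict Implicit. Unset Printing Implicit Defensive.

(* A resolvable design on the finite point set T, given by its set R of
   parallel classes; the block collection is the union of the classes. *)
Definition resolvable_design (T : finType) (R : {set {set {set T}}}) : Prop :=
  (forall P, P \in R -> partition P [set: T]) /\
  exists k, forall P B, P \in R -> B \in P -> #|B| = k.

(* Users are indexed by u : {ffun 'I_z -> bool}; u s = false means a_s = i_s
   (block Ci s), u s = true means a_s = j_s (block Cj s). *)
Definition user_block (T : finType) (z : nat) (Ci Cj : 'I_z -> {set T})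
  (u : {ffun 'I_z -> bool}) (s : 'I_z) : {set T} :=
  if u s then Cj s else Ci s.

Definition other_block (T : finType) (z : nat) (Ci Cj : 'I_z -> {set T})
  (u : {ffun 'I_z -> bool}) (s : 'I_z) : {set T} :=
  if u s then Ci s else Cj s.

Definition Yset (T : finType) (z : nat) (Ci Cj : 'I_z -> {set T})
  (u : {ffun 'I_z -> bool}) : {set T} :=
  \bigcup_(s < z) user_block Ci Cj u s.

Definition fset_user (T : finType) (z : nat) (Ci Cj : 'I_z -> {set T})
  (u : {ffun 'I_z -> bool}) : {set T} :=
  \bigcap_(s < z) other_block Ci Cj u s.

From mathcomp Require Import all_boot.

(* A user t != m differs from m at some coordinate s, and there its block
   C_{s,a_s} is the complementary block C_{s,e_s} of m, so f_m lies in Y_t.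
   Conversely, if x misses C_{s0,e_{s0}}, the user that takes C_{s0,e_{s0}} at
   s0 and, at every other s, whichever of C_{s,i_s}, C_{s,j_s} avoids x (they
   are disjoint blocks of P_s) differs from m and has x outside Y_t. *)

Section UserBlocks.

Variables (T : finType) (z : nat) (Ci Cj : 'I_z -> {set T}).
Hypothesis disjoint_blocks : forall s, [disjoint Ci s & Cj s].

Lemma user_block_flip {t m : {ffun 'I_z -> bool}} {s} :
  t s != m s -> user_block Ci Cj t s = other_block Ci Cj m s.
Proof. by rewrite /user_block /other_block; case: (t s); case: (m s). Qed.

Lemma fset_user_sub_Yset (m t : {ffun 'I_z -> bool}) :
  t != m -> fset_user Ci Cj m \subset Yset Ci Cj t.
Proof.
move=> tm; have [s tms] : exists s, t s != m s.
  apply/existsP; apply: contraR tm => /existsPn eq_tm.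
  by apply/eqP/ffunP => s; apply/eqP/negPn.
apply: subset_trans (bigcap_inf s isT) _.
by rewrite -(user_block_flip tms); apply: bigcup_sup.
Qed.

Definition avoiding_user (m : {ffun 'I_z -> bool}) (s0 : 'I_z) (x : T) :=
  [ffun s => if s == s0 then ~~ m s0 else x \in Ci s].

Lemma avoiding_user_neq m s0 x : avoiding_user m s0 x != m.
Proof. by apply/eqP => /ffunP /(_ s0); rewrite ffunE eqxx; case: (m s0). Qed.

Lemma notin_Yset_avoiding_user {m s0 x} :
  x \notin other_block Ci Cj m s0 -> x \notin Yset Ci Cj (avoiding_user m s0 x).
Proof.
move=> x_other; apply/bigcupP => -[s _]; have [-> | ns0] := eqVneq s s0.
  have flipped : avoiding_user m s0 x s0 != m s0 by rewrite ffunE eqxx; case: (m s0).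
  by rewrite (user_block_flip flipped) (negPf x_other).
rewrite /user_block ffunE (negPf ns0); case: ifP => [x_Ci | -> //].
by rewrite (disjointFr (disjoint_blocks s) x_Ci).
Qed.

Lemma fset_user_eq_bigcap_Yset (m : {ffun 'I_z -> bool}) :
  fset_user Ci Cj m = \bigcap_(t | t != m) Yset Ci Cj t.
Proof.
apply/eqP; rewrite eqEsubset; apply/andP; split.
  by apply/bigcapsP => t; apply: fset_user_sub_Yset.
apply/subsetP => x /bigcapP x_Y; apply/bigcapP => s0 _; apply: contraT => x_other.
by have := notin_Yset_avoiding_user x_other; rewrite x_Y ?avoiding_user_neq.
Qed.

End UserBlocks.

Theorem lemma6 (T : finType) (R : {set {set {set T}}}) (z : nat)
  (P : 'I_z -> {set {set T}}) (Ci Cj : 'I_z -> {set T}) :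
  resolvable_design R ->
  2 <= z ->
  injective P ->
  (forall s, P s \in R) ->
  (forall s, Ci s \in P s) ->
  (forall s, Cj s \in P s) ->
  (forall s, Ci s != Cj s) ->
  forall m : {ffun 'I_z -> bool},
    fset_user Ci Cj m = \bigcap_(t : {ffun 'I_z -> bool} | t != m) Yset Ci Cj t.
Proof.
move=> [partR _] _ _ PR Ci_P Cj_P Ci_Cj m.
apply: fset_user_eq_bigcap_Yset => s.
exact: trivIsetP (partition_trivIset (partR _ (PR s))) _ _ (Ci_P s) (Cj_P s) (Ci_Cj s).
Qed.
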